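(* For weights $\boldsymbol\sigma,\boldsymbol\sigma'$ and $a\in\mathbb C$ (generic, so that the entries below are defined), define the $N\times N$ matrix $$F_{lj}(\boldsymbol\sigma',a,\boldsymbol\sigma)=\prod_{k\ne l}\frac{\sin\pi\left((a+1)/N+\sigma'^{(j)}-\sigma^{(k)}\right)}{\sin\pi\left(\sigma^{(k)}-\sigma^{(l)}\right)}.$$ Then for $m=1,\dots,N$, $$F(\boldsymbol\sigma',a,\boldsymbol\sigma\pm\boldsymbol h_m)=D_m^{N-1}F(\boldsymbol\sigma',a\pm1,\boldsymbol\sigma),\qquad F(\boldsymbol\sigma'\pm\boldsymbol h_m,a,\boldsymbol\sigma)=F(\boldsymbol\sigma',a\mp1,\boldsymbol\sigma)D_m^{N-1},$$ and consequently, for $m,s=1,\dots,N$, $$F(\boldsymbol\sigma',a,\boldsymbol\sigma+\boldsymbol h_m-\boldsymbol h_s)=D_m^{N-1}D_s^{N-1}F(\boldsymbol\sigma',a,\boldsymbol\sigma),\qquad F(\boldsymbol\sigma'+\boldsymbol h_m-\boldsymbol h_s,a,\boldsymbol\sigma)=F(\boldsymbol\sigma',a,\boldsymbol\sigma)D_m^{N-1}D_s^{N-1}.$$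
   Context: Weights are vectors $\boldsymbol\sigma=(\sigma^{(1)},\dots,\sigma^{(N)})\in\mathbb C^N$ with zero component sum. $\boldsymbol h_m\in\mathbb C^N$ has components $h_m^{(k)}=\delta_{mk}-1/N$. $D_m$ is the diagonal matrix with $(D_m)_{kj}=(-1)^{\delta_{km}}\delta_{kj}$. *)

From HB Require Import structures.
From mathcomp Require Import all_boot all_order all_algebra.
From mathcomp Require Import all_classical all_reals all_analysis.
From mathcomp Require Import complex.
Set Implicit Arguments. Unset Strict Implicit. Unset Printing Implicit Defensive.
Import Order.TTheory GRing.Theory Num.Theory.
Local Open Scope ring_scope.
Local Open Scope complex_scope.

(* Complex sine: sin(x + i y) = sin x cosh y + i cos x sinh y. *)
Definition sinC (R : realType) (z : R[i]) : R[i] :=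
  let: Complex x y := z in
  (sin x * ((expR y + expR (- y)) / 2)) +i* (cos x * ((expR y - expR (- y)) / 2)).

Definition is_weight (R : realType) (N : nat) (s : 'I_N -> R[i]) : Prop :=
  \sum_(k < N) s k = 0.

Definition hvec (R : realType) (N : nat) (m : 'I_N) : 'I_N -> R[i] :=
  fun k => (k == m)%:R - (N%:R)^-1.

Definition wadd (R : realType) (N : nat) (s t : 'I_N -> R[i]) : 'I_N -> R[i] :=
  fun k => s k + t k.
Definition wsub (R : realType) (N : nat) (s t : 'I_N -> R[i]) : 'I_N -> R[i] :=
  fun k => s k - t k.

Definition Dmat (R : realType) (N : nat) (m : 'I_N) : 'M[R[i]]_N :=
  \matrix_(k, j) ((-1) ^+ (k == m) * (k == j)%:R).

Definition Fmat (R : realType) (N : nat) (s' : 'I_N -> R[i]) (a : R[i])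
    (s : 'I_N -> R[i]) : 'M[R[i]]_N :=
  \matrix_(l, j) \prod_(k < N | k != l)
     (sinC ((pi : R)%:C * ((a + 1) / N%:R + s' j - s k))
      / sinC ((pi : R)%:C * (s k - s l))).

Arguments Dmat {R N} m.
Arguments hvec {R N} m.

(* Write h_m = e_m - (1/N, ..., 1/N).  The constant part shifts every
   argument of the numerator sines by -+1/N, which is absorbed by a -> a -+ 1, and
   leaves the denominators invariant.  Moving one coordinate by an odd integer e
   flips the sign of each sine containing it, since sin(pi (w + e)) = - sin(pi w):
   in F(s', a, s + e_m) this multiplies row m by (-1)^(N-1) (its N-1 denominators
   flip) and leaves the other rows unchanged (numerator and denominator of the
   factor k = m flip together); in F(s' + e_m, a, s) it multiplies column m by
   (-1)^(N-1).  The composite shifts follow since diagonal matrices commute. *)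
From HB Require Import structures.
From mathcomp Require Import all_boot all_order all_algebra.
From mathcomp Require Import all_classical all_reals all_analysis.
From mathcomp Require Import complex.
From mathcomp Require Import ring.
Import Order.TTheory GRing.Theory Num.Theory.
Local Open Scope ring_scope.
Local Open Scope complex_scope.

Section SineAntiperiods.
Context {R : realType}.

Definition sinCpi_antiperiod (e : R[i]) : Prop :=
  forall w : R[i], sinC ((pi : R)%:C * (w + e)) = - sinC ((pi : R)%:C * w).

Lemma sinCpi_antiperiod1 : sinCpi_antiperiod 1.
Proof.
case=> x y; rewrite /sinC.
have -> : (pi : R)%:C * (x +i* y + 1) = (pi * x + pi) +i* (pi * y).
  by apply/eqP; rewrite eq_complex /=; apply/andP; split; apply/eqP; ring.
have -> : (pi : R)%:C * (x +i* y) = (pi * x) +i* (pi * y).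
  by apply/eqP; rewrite eq_complex /=; apply/andP; split; apply/eqP; ring.
rewrite sinDpi cosDpi.
by apply/eqP; rewrite eq_complex /=; apply/andP; split; apply/eqP; ring.
Qed.

Lemma sinCpi_antiperiodN {e : R[i]} :
  sinCpi_antiperiod e -> sinCpi_antiperiod (- e).
Proof. by move=> he w; rewrite -{2}(subrK e w) he opprK. Qed.

End SineAntiperiods.

Section ShiftedWeights.
Context {R : realType} {N : nat}.
Implicit Types (a c e : R[i]) (m : 'I_N).
Local Notation weight := ('I_N -> R[i]).

Definition wshift (s : weight) c : weight := fun k => s k + c.

Definition wbump (s : weight) m e : weight :=
  fun k => if k == m then s k + e else s k.

Lemma wadd_hvec (s : weight) m :
  wadd s (hvec m) = wshift (wbump s m 1) (- 1 / N%:R).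
Proof.
by apply/funext => k; rewrite /wadd /hvec /wshift /wbump; case: eqP => _ /=; ring.
Qed.

Lemma wsub_hvec (s : weight) m :
  wsub s (hvec m) = wshift (wbump s m (- 1)) (1 / N%:R).
Proof.
by apply/funext => k; rewrite /wsub /hvec /wshift /wbump; case: eqP => _ /=; ring.
Qed.

Lemma Fmat_wshiftr (s' s : weight) a c :
  Fmat s' a (wshift s (c / N%:R)) = Fmat s' (a - c) s.
Proof.
apply/matrixP => l j; rewrite !mxE; apply: eq_bigr => k _; rewrite /wshift.
by congr (sinC (_ * _) / sinC (_ * _)); ring.
Qed.

Lemma Fmat_wshiftl (s' s : weight) a c :
  Fmat (wshift s' (c / N%:R)) a s = Fmat s' (a + c) s.
Proof.
apply/matrixP => l j; rewrite !mxE; apply: eq_bigr => k _; rewrite /wshift.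
by congr (sinC (_ * _) / _); ring.
Qed.

Lemma Dmat_expn m n :
  Dmat m ^+ n = diag_mx (\row_k (-1) ^+ ((k == m) * n) : 'rV[R[i]]_N).
Proof.
elim: n => [|n IHn].
  by rewrite expr0; apply/matrixP => i j; rewrite !mxE muln0 expr0.
rewrite exprS IHn -mulmxE.
have -> : Dmat m = diag_mx (\row_k (-1) ^+ (k == m) : 'rV[R[i]]_N).
  by apply/matrixP => i j; rewrite !mxE mulr_natr.
by rewrite mulmx_diag; congr diag_mx; apply/rowP => k; rewrite !mxE -exprD mulnS.
Qed.

Lemma Dmat_expnC m t n :
  Dmat m ^+ n *m Dmat t ^+ n = Dmat t ^+ n *m (Dmat m ^+ n : 'M[R[i]]_N).
Proof. by rewrite !Dmat_expn diag_mxC. Qed.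

Lemma Fmat_wbumpr (s' s : weight) a m e : sinCpi_antiperiod e ->
  Fmat s' a (wbump s m e) = Dmat m ^+ N.-1 *m Fmat s' a s.
Proof.
move=> he; have heN := sinCpi_antiperiodN he.
rewrite Dmat_expn mul_diag_mx; apply/matrixP => l j; rewrite !mxE /wbump.
have [->|neq_lm] := eqVneq l m.
  have -> : N.-1 = #|predC1 m| by rewrite cardC1 card_ord.
  rewrite mul1n -prodrN; apply: eq_bigr => k /negbTE ->.
  by rewrite opprD addrA heN invrN mulrN.
rewrite mul0n expr0 mul1r; apply: eq_bigr => k _.
have [->|//] := eqVneq k m.
by rewrite opprD addrA heN (addrAC (s m)) he invrN mulrN mulNr opprK.
Qed.

Lemma Fmat_wbumpl (s' s : weight) a m e : sinCpi_antiperiod e ->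
  Fmat (wbump s' m e) a s = Fmat s' a s *m Dmat m ^+ N.-1.
Proof.
move=> he; rewrite Dmat_expn mul_mx_diag.
apply/matrixP => l j; rewrite !mxE /wbump.
have [->|neq_jm] := eqVneq j m; last by rewrite mul0n expr0 mulr1.
have -> : N.-1 = #|predC1 l| by rewrite cardC1 card_ord.
rewrite mul1n [RHS]mulrC -prodrN; apply: eq_bigr => k _.
by rewrite addrA (addrAC _ e) he mulNr.
Qed.

End ShiftedWeights.

Section ElementaryShifts.
Context {R : realType} {N : nat} (s' s : 'I_N -> R[i]) (a : R[i]) (m : 'I_N).

Lemma Fmat_waddr_hvec :
  Fmat s' a (wadd s (hvec m)) = Dmat m ^+ N.-1 *m Fmat s' (a + 1) s.
Proof.
rewrite wadd_hvec Fmat_wshiftr opprK Fmat_wbumpr //.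
exact: sinCpi_antiperiod1.
Qed.

Lemma Fmat_wsubr_hvec :
  Fmat s' a (wsub s (hvec m)) = Dmat m ^+ N.-1 *m Fmat s' (a - 1) s.
Proof.
rewrite wsub_hvec Fmat_wshiftr Fmat_wbumpr //.
exact/sinCpi_antiperiodN/sinCpi_antiperiod1.
Qed.

Lemma Fmat_waddl_hvec :
  Fmat (wadd s' (hvec m)) a s = Fmat s' (a - 1) s *m Dmat m ^+ N.-1.
Proof.
rewrite wadd_hvec Fmat_wshiftl Fmat_wbumpl //.
exact: sinCpi_antiperiod1.
Qed.

Lemma Fmat_wsubl_hvec :
  Fmat (wsub s' (hvec m)) a s = Fmat s' (a + 1) s *m Dmat m ^+ N.-1.
Proof.
rewrite wsub_hvec Fmat_wshiftl Fmat_wbumpl //.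
exact/sinCpi_antiperiodN/sinCpi_antiperiod1.
Qed.

End ElementaryShifts.

Theorem proposition4p2 (R : realType) (N : nat) (s' s : 'I_N -> R[i]) (a : R[i]) :
  is_weight s' -> is_weight s ->
  (forall k l : 'I_N, k != l -> sinC ((pi : R)%:C * (s k - s l)) != 0) ->
  (forall m : 'I_N,
      Fmat s' a (wadd s (hvec m)) = Dmat m ^+ N.-1 *m Fmat s' (a + 1) s /\
      Fmat s' a (wsub s (hvec m)) = Dmat m ^+ N.-1 *m Fmat s' (a - 1) s /\
      Fmat (wadd s' (hvec m)) a s = Fmat s' (a - 1) s *m Dmat m ^+ N.-1 /\
      Fmat (wsub s' (hvec m)) a s = Fmat s' (a + 1) s *m Dmat m ^+ N.-1) /\
  (forall m t : 'I_N,
      Fmat s' a (wsub (wadd s (hvec m)) (hvec t))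
        = Dmat m ^+ N.-1 *m Dmat t ^+ N.-1 *m Fmat s' a s /\
      Fmat (wsub (wadd s' (hvec m)) (hvec t)) a s
        = Fmat s' a s *m Dmat m ^+ N.-1 *m Dmat t ^+ N.-1).
Proof.
(* The shifts only flip signs of sines. *)
move=> _ _ _; split=> [m | m t].
  by rewrite Fmat_waddr_hvec Fmat_wsubr_hvec Fmat_waddl_hvec Fmat_wsubl_hvec.
rewrite Fmat_wsubr_hvec Fmat_waddr_hvec subrK mulmxA Dmat_expnC.
by rewrite Fmat_wsubl_hvec Fmat_waddl_hvec addrK.
Qed.
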